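(* Let $(G_n)_{n \geq 1}$ be a sequence of finite solvable groups of bounded derived length with $|G_n| \to \infty$. Then $(G_n)_{n \geq 1}$ does not have property BAb; that is, there is no function $f$ with $ab_k(G_n) \leq f(k)$ for all $k$ and all $n$. In particular $(G_n)_{n \geq 1}$ is not an expanding sequence of groups.
   Context: For a group $G$, $G' = [G,G]$ and $ab_k(G) = \sup\{ |H : H'| : H \leqslant G, \ |G:H| \leq k\}$. A sequence of groups $(G_n)$ has property BAb (bounded abelianizations) if there is a function $f$ of $k$ alone with $ab_k(G_n) \leq f(k)$ for all $k, n$. For a finite group $G$ and symmetric generating set $S$, the Cayley graph $\mathrm{Cay}(G,S)$ has vertex set $G$ and edges $(g, gs)$ for $g \in G$, $s \in S$. For a finite graph $\Gamma$, $h_{ver}(\Gamma) = \min_{X \neq \emptyset, |X| \leq |V(\Gamma)|/2} |\partial_{ver}X|/|X|$, where $\partial_{ver}X$ is the set of vertices at distance exactly $1$ from $X$; a sequence of regular bounded-degree graphs with vertex counts tending to infinity is expander if $h_{ver} \geq \varepsilon$ for a fixed $\varepsilon>0$. A sequence of finite groups $(G_n)$ with $|G_n| \to \infty$ is an expanding sequence if there are symmetric generating sets $S_n$ of bounded cardinality with $(\mathrm{Cay}(G_n, S_n))$ expander graphs. *)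

From HB Require Import structures.
From mathcomp Require Import all_boot all_order all_algebra all_fingroup all_solvable.
Set Implicit Arguments. Unset Strict Implicit. Unset Printing Implicit Defensive.
Import Order.TTheory GRing.Theory Num.Theory.

Local Open Scope group_scope.

(* ab_k(G) = sup { |H : H'| : H <= G, |G : H| <= k }  (a finite max; 0 if empty) *)
Definition ab_k (gT : finGroupType) (k : nat) (G : {set gT}) : nat :=
  \max_(H : {group gT} | (H \subset G) && (#|G : H| <= k)%N) #|H : H^`(1)|.

Definition BAb (gT : nat -> finGroupType) (G : forall n, {group gT n}) : Prop :=
  exists f : nat -> nat, forall k n, (ab_k k (G n) <= f k)%N.

(* Vertex boundary of X in Cay(G,S): vertices (of G) at distance exactly 1 from X,
   where edges are (g, g s), g in G, s in S. *)
Definition ver_boundary (gT : finGroupType) (G S X : {set gT}) : {set gT} :=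
  [set y in G | (y \notin X) && [exists x in X, exists s in S, y == x * s]].

Definition hver_ge (gT : finGroupType) (G S : {set gT}) (eps : rat) : Prop :=
  forall X : {set gT}, X \subset G -> X != set0 -> (2 * #|X| <= #|G|)%N ->
    (eps <= (#|ver_boundary G S X|)%:R / (#|X|)%:R)%R.

Definition sym_gen_set (gT : finGroupType) (G S : {set gT}) : Prop :=
  [/\ S \subset G, [set s^-1 | s in S] = S & <<S>> = G].

Definition expanding_seq (gT : nat -> finGroupType) (G : forall n, {group gT n}) : Prop :=
  (forall M : nat, exists N : nat, forall n, (N <= n)%N -> (M < #|G n|)%N) /\
  exists (b : nat) (eps : rat), (0 < eps)%R /\
    forall n, exists S : {set gT n},
      [/\ sym_gen_set (G n) S, (#|S| <= b)%N & hver_ge (G n) S eps].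

From HB Require Import structures.
From mathcomp Require Import all_boot all_order all_algebra all_fingroup all_solvable.
From mathcomp Require Import lra.
Set Implicit Arguments. Unset Strict Implicit. Unset Printing Implicit Defensive.
Import Order.TTheory GRing.Theory Num.Theory.

(* Both properties bound, for every [k], the abelianizations [|H : H'|] of the
   subgroups [H] of index at most [k] in [G n], uniformly in [n].  Induction on
   [i] then bounds [|G n : (G n)^`(i)|] uniformly in [n], which for [i] the
   derived length contradicts [|G n| -> oo] (solvability is a consequence of
   the bounded derived length and plays no further role).
   For BAb the bound is immediate.  For expanders with [b] generators and
   expansion [eps], take [A] of index at most [m] and [N = A']: the sets
   [N S^(<= r)] grow by a factor [1 + eps] at each step as long as they fill at
   most half of [G n], while, [A / N] being abelian, Schreier generators show
   that they have at most [m (r + 1)^(m b) |N|] elements.  Hence they exceed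
   half of [G n] before a radius depending only on [m], [b] and [eps], which
   bounds [|G n : N|]. *)

Lemma leq_expn2r (m n e : nat) : (m <= n)%N -> (m ^ e <= n ^ e)%N.
Proof. by move=> le_mn; elim: e => [|e IH]; rewrite ?expnS ?leq_mul. Qed.

(* With [t = c (K + 1)^K] and [j = (K + 1) t]:
   [c (j + 1)^K <= t (t + 1)^K <= t 2^(K t) < 2^j]. *)
Lemma exp2_gt_poly (c K : nat) : exists j, (c * j.+1 ^ K < 2 ^ j)%N.
Proof.
set t := (c * K.+1 ^ K)%N; exists (K.+1 * t)%N.
have le_j : ((K.+1 * t).+1 <= K.+1 * t.+1)%N by rewrite mulnS addSn ltnS leq_addl.
apply: (@leq_ltn_trans (c * (K.+1 * t.+1) ^ K)%N).
  by rewrite leq_mul2l leq_expn2r ?orbT.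
rewrite expnMn mulnA -/t mulSn expnD.
have le_tK : (t.+1 ^ K <= 2 ^ (K * t))%N by rewrite mulnC expnM leq_expn2r // ltn_expl.
apply: (@leq_ltn_trans (t * 2 ^ (K * t))%N); first by rewrite leq_mul2l le_tK orbT.
by rewrite ltn_pmul2r ?expn_gt0 // ltn_expl.
Qed.

Section ExpVsPoly.
Local Open Scope ring_scope.

Lemma bernoulli_ineq (R : realFieldType) (e : R) (n : nat) :
  0 <= e -> 1 + n%:R * e <= (1 + e) ^+ n.
Proof.
move=> e_ge0; elim: n => [|n IH]; first by rewrite mul0r addr0 expr0.
rewrite exprS; apply: le_trans (_ : (1 + e) * (1 + n%:R * e) <= _); last first.
  by rewrite ler_wpM2l // addr_ge0.
have : 0 <= e * (n%:R * e) by rewrite !mulr_ge0.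
rewrite -natr1 mulrDr mulr1 !mulrDl !mul1r; lra.
Qed.

(* For [p >= 1 / eps], Bernoulli gives [(1 + eps)^p >= 2], so [r = p j] works
   for the [j] of [exp2_gt_poly]. *)
Lemma exp_gt_poly (R : archiRealFieldType) (eps : R) (c K : nat) : 0 < eps ->
  exists r : nat, (c * r.+1 ^ K)%:R < (1 + eps) ^+ r.
Proof.
move=> eps_gt0; set p := Num.Def.archi_bound eps^-1.
have p_eps : 1 <= p%:R * eps.
  rewrite -(ler_pdivrMr _ _ eps_gt0) mul1r ltW // archi_boundP //.
  by rewrite invr_ge0 ltW.
have p_gt0 : (0 < p)%N.
  by rewrite lt0n; apply: contraTneq p_eps => ->; rewrite mul0r ler10.
have [j lt_j] := exp2_gt_poly (c * p ^ K) K.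
exists (p * j)%N.
apply: (@lt_le_trans _ _ (2 ^ j)%:R).
  rewrite ltr_nat (leq_ltn_trans _ lt_j) // -mulnA leq_mul2l -expnMn.
  rewrite leq_expn2r ?orbT //.
  by rewrite mulnS -addn1 addnC leq_add2r.
have eps_ge0 := ltW eps_gt0.
rewrite natrX exprM lerXn2r ?nnegrE ?exprn_ge0 ?addr_ge0 //.
by apply: le_trans (bernoulli_ineq p eps_ge0); rewrite lerD2l.
Qed.

End ExpVsPoly.

Local Open Scope group_scope.

Lemma leq_imset2_card (aT aT2 rT : finType) (f : aT -> aT2 -> rT)
    (A : {set aT}) (B : {set aT2}) :
  (#|f @2: (A, B)| <= #|A| * #|B|)%N.
Proof. by rewrite curry_imset2X (leq_trans (leq_imset_card _ _)) // cardsX. Qed.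

Fixpoint ball (gT : finGroupType) (N S : {set gT}) (r : nat) : {set gT} :=
  if r is r'.+1 then ball N S r' :|: ball N S r' * S else N.

Section Balls.
Variable gT : finGroupType.
Implicit Types (N H : {group gT}) (S Y : {set gT}).

Lemma sub_ball (N S : {set gT}) r : N \subset ball N S r.
Proof. by elim: r => //= r IH; rewrite (subset_trans IH) ?subsetUl. Qed.

Lemma ball_sub H (N S : {set gT}) r :
  N \subset H -> S \subset H -> ball N S r \subset H.
Proof. by move=> sNH sSH; elim: r => //= r IH; rewrite subUset IH mul_subG. Qed.

Lemma mem_ball_mulr N Y r x n :
  x \in ball N (Y * N) r -> n \in N -> x * n \in ball N (Y * N) r.
Proof.
elim: r x => [|r IH] x /= Bx Nn; first exact: groupM.
case/setUP: Bx => [Bx|/mulsgP[w z Bw /mulsgP[y m Yy Nm ->] ->]].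
  by rewrite inE IH.
by rewrite inE -!mulgA mem_mulg ?orbT // mem_mulg ?groupM.
Qed.

Lemma ball_set0 N r : ball N (set0 * N) r = N.
Proof.
apply/eqP; rewrite eqEsubset sub_ball andbT ball_sub //.
by apply/subsetP=> x /mulsgP[y n]; rewrite inE.
Qed.

End Balls.

Section AbelianBalls.
Variables (gT : finGroupType) (A N : {group gT}).
Hypotheses (sNA : N \subset A) (sA'N : [~: A, A] \subset N).
Implicit Types (Y : {set gT}) (x y : gT) (r : nat).

(* Since [A / N] is abelian, [u * y = y * (u * [~ u, y])] lets every
   occurrence of [y] be moved to the front. *)
Lemma mem_ball_setU1 Y r y x : Y \subset A -> y \in A ->
  x \in ball N ((y |: Y) * N) r ->
  exists2 e, (e <= r)%N & exists2 u, u \in ball N (Y * N) r & x = y ^+ e * u.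
Proof.
move=> sYA Ay; elim: r x => [|r IH] x /=.
  by move=> Nx; exists 0%N => //; exists x; rewrite ?mul1g.
case/setUP=> [/IH[e le_er [u Bu ->]]|].
  by exists e; [apply: leqW | exists u; rewrite ?inE ?Bu].
case/mulsgP=> w z Bw /mulsgP[y' m Yy' Nm ->] ->.
have [e le_er [u Bu ->]] := IH w Bw.
case/setU1P: Yy' => [->|Yy'].
  have Au : u \in A by apply: subsetP Bu; rewrite ball_sub ?mul_subG.
  have N_uy : [~ u, y] \in N by rewrite (subsetP sA'N) ?mem_commg.
  exists e.+1 => //; exists (u * [~ u, y] * m).
    by rewrite inE !mem_ball_mulr.
  by rewrite expgSr !mulgA -(mulgA _ u y) (commgC u y) !mulgA.
exists e; first exact: leqW.
by exists (u * (y' * m)); rewrite ?mulgA // inE mem_mulg ?orbT ?mem_mulg.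
Qed.

Lemma card_ball_setU1 Y r y : Y \subset A -> y \in A ->
  (#|ball N ((y |: Y) * N)%g r| <= r.+1 * #|ball N (Y * N)%g r|)%N.
Proof.
move=> sYA Ay; set Py := [set y ^+ i | i : 'I_r.+1].
have cPy : (#|Py| <= r.+1)%N by rewrite (leq_trans (leq_imset_card _ _)) ?card_ord.
apply: leq_trans (leq_trans (leq_imset2_card *%g Py _) (leq_mul cPy (leqnn _))).
apply/subset_leq_card/subsetP=> x /(mem_ball_setU1 sYA Ay)[e le_er [u Bu ->]].
by rewrite imset2_f //; apply/imsetP; exists (Ordinal (n := r.+1) le_er).
Qed.

Lemma card_ball_abelian Y r : Y \subset A ->
  (#|ball N (Y * N)%g r| <= r.+1 ^ #|Y| * #|N|)%N.
Proof.
elim: {Y}_.+1 {-2}Y (ltnSn #|Y|) => // k IH Y ltYk sYA.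
have [->|[y Yy]] := set_0Vmem Y; first by rewrite ball_set0 cards0 mul1n.
have ltY'k : (#|Y :\ y| < k)%N by rewrite -ltnS (leq_trans _ ltYk) // (cardsD1 y Y) Yy.
have sY'A : Y :\ y \subset A by rewrite (subset_trans (subsetDl _ _)).
rewrite (cardsD1 y Y) Yy -{1}(setD1K Yy) expnS -mulnA.
rewrite (leq_trans (card_ball_setU1 r sY'A (subsetP sYA y Yy))) //.
by rewrite leq_mul2l IH ?orbT.
Qed.

End AbelianBalls.

Definition rcoset_reprs (gT : finGroupType) (A B : {set gT}) : {set gT} :=
  repr @: rcosets A B.

Definition schreier_gens (gT : finGroupType) (A T S : {set gT}) : {set gT} :=
  [set t * s * (repr (A :* (t * s)))^-1 | t in T, s in S].

Section SchreierGenerators.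
Variable gT : finGroupType.
Implicit Types (A B G N : {group gT}) (S T : {set gT}) (x : gT) (r : nat).

Lemma mulg_repr_rcosetV A x : x * (repr (A :* x))^-1 \in A.
Proof. by rewrite -[_ * _]invgK invMg invgK groupV -mem_rcoset mem_repr_rcoset. Qed.

Lemma repr_rcoset_in A B x : A \subset B -> x \in B -> repr (A :* x) \in B.
Proof.
by move=> sAB Bx; rewrite -groupV -(groupMl _ Bx) (subsetP sAB) ?mulg_repr_rcosetV.
Qed.

Lemma mem_rcoset_reprs A B x : x \in B -> repr (A :* x) \in rcoset_reprs A B.
Proof. by move=> Bx; rewrite imset_f // mem_rcosets -(mul1g x) mem_mulg. Qed.

Lemma rcoset_reprs_sub A B : A \subset B -> rcoset_reprs A B \subset B.
Proof.
move=> sAB; apply/subsetP=> _ /imsetP[_ /rcosetsP[x Bx ->] ->].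
exact: repr_rcoset_in.
Qed.

Lemma card_rcoset_reprs A B : (#|rcoset_reprs A B| <= #|B : A|)%N.
Proof. exact: leq_imset_card. Qed.

Lemma schreier_gens_sub A T S : schreier_gens A T S \subset A.
Proof.
by apply/subsetP=> _ /imset2P[t s _ _ ->]; rewrite mulg_repr_rcosetV.
Qed.

(* Writing [t * s] as a Schreier generator times the representative of
   [A :* (t * s)] moves the transversal factor to the right, one letter at a
   time. *)
Lemma ball_sub_schreier G A N S r : A \subset G -> S \subset G ->
  ball N S r \subset
    ball N (schreier_gens A (rcoset_reprs A G) S * N) r * rcoset_reprs A G.
Proof.
move=> sAG sSG; set T := rcoset_reprs A G.
have sTG : T \subset G := rcoset_reprs_sub sAG.
elim: r => [|r IH] /=.
  apply/subsetP=> x Nx; rewrite -[x]mulg1 mem_mulg //.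
  by rewrite -(repr_group A) -(rcoset1 A) mem_rcoset_reprs.
rewrite subUset (subset_trans IH) ?mulSg ?subsetUl //=.
apply/subsetP=> x /mulsgP[z s /(subsetP IH)/mulsgP[w t Bw Tt ->] Ss ->].
have Gts : t * s \in G by rewrite groupM ?(subsetP sTG t Tt) ?(subsetP sSG s Ss).
rewrite -mulgA -(mulgKV (repr (A :* (t * s))) (t * s)) mulgA mem_mulg //.
  by rewrite inE -[t * s * _]mulg1 mem_mulg ?orbT // mem_mulg //; apply: imset2_f.
exact: mem_rcoset_reprs.
Qed.

Lemma card_ball_le G A N S r :
  A \subset G -> N \subset A -> [~: A, A] \subset N -> S \subset G ->
  (#|ball N S r| <= r.+1 ^ (#|G : A| * #|S|) * #|N| * #|G : A|)%N.
Proof.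
move=> sAG sNA sA'N sSG; set T := rcoset_reprs A G; set Y := schreier_gens A T S.
have cY : (#|Y| <= #|G : A| * #|S|)%N.
  by rewrite (leq_trans (leq_imset2_card _ _ _)) ?leq_mul ?card_rcoset_reprs.
apply: leq_trans (subset_leq_card (ball_sub_schreier N r sAG sSG)) _.
apply: leq_trans (leq_imset2_card _ _ _) _.
rewrite leq_mul ?card_rcoset_reprs // (leq_trans (card_ball_abelian sNA sA'N r _)) //.
  exact: schreier_gens_sub.
by rewrite leq_mul2r leq_pexp2l ?orbT.
Qed.

End SchreierGenerators.

Section ExpansionGrowth.
Variables (gT : finGroupType) (G N : {group gT}) (S : {set gT}) (eps : rat).
Hypotheses (sNG : N \subset G) (sSG : S \subset G).
Hypotheses (eps_ge0 : (0 <= eps)%R) (expS : hver_ge G S eps).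

Lemma ballS_boundary r : ball N S r.+1 = ball N S r :|: ver_boundary G S (ball N S r).
Proof.
apply/setP=> x; rewrite /= !inE; have [//|Bx /=] := boolP (x \in ball N S r).
apply/idP/andP=> [BSx|[_ /existsP[w /andP[Bw /existsP[s /andP[Ss /eqP->]]]]]].
  split; first by apply: subsetP BSx; rewrite mul_subG ?ball_sub.
  by case/mulsgP: BSx => w s Bw Ss ->; apply/existsP; exists w; rewrite Bw;
     apply/existsP; exists s; rewrite Ss eqxx.
exact: mem_mulg.
Qed.

Lemma card_ballS r :
  #|ball N S r.+1| = (#|ball N S r| + #|ver_boundary G S (ball N S r)|)%N.
Proof.
rewrite ballS_boundary cardsU; set B := ver_boundary _ _ _.
suff -> : ball N S r :&: B = set0 by rewrite cards0 subn0.
by apply/setP=> x; rewrite !inE; case: (x \in ball N S r); rewrite ?andbF.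
Qed.

Lemma ball_growth r : (forall r', (r' < r)%N -> (2 * #|ball N S r'| <= #|G|)%N) ->
  ((1 + eps) ^+ r * #|N|%:R <= #|ball N S r|%:R)%R.
Proof.
elim: r => [|r IH] small_balls; first by rewrite expr0 mul1r.
set X := ball N S r.
have X_ne0 : X != set0.
  by apply/set0Pn; exists 1; exact: subsetP (sub_ball N S r) 1 (group1 N).
have X_gt0 : (0 < #|X|%:R :> rat)%R by rewrite ltr0n card_gt0.
have : (eps <= #|ver_boundary G S X|%:R / #|X|%:R)%R.
  by apply: expS; rewrite ?ball_sub ?small_balls.
rewrite (ler_pdivlMr _ _ X_gt0) card_ballS natrD exprS -mulrA -/X => boundary_large.
apply: le_trans (_ : (1 + eps) * #|X|%:R <= _)%R; last first.
  by rewrite mulrDl mul1r lerD2l.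
rewrite ler_wpM2l ?addr_ge0 //; apply: IH => r' lt_r'r.
exact: small_balls (leqW lt_r'r).
Qed.

Lemma ball_exceeds_half R :
  (#|ball N S R|%:R < (1 + eps) ^+ R * #|N|%:R)%R ->
  exists2 r, (r < R)%N & (#|G| < 2 * #|ball N S r|)%N.
Proof.
move=> ball_small.
have [/existsP[r]|] := boolP [exists r : 'I_R, #|G| < 2 * #|ball N S r|]%N.
  by exists r.
rewrite negb_exists => /forallP half.
have /ball_growth : forall r, (r < R)%N -> (2 * #|ball N S r| <= #|G|)%N.
  by move=> r lt_rR; have := half (Ordinal lt_rR); rewrite -leqNgt.
by rewrite leNgt ball_small.
Qed.

End ExpansionGrowth.

Lemma index_le_of_expansion (gT : finGroupType) (G A N : {group gT}) (S : {set gT})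
    (eps : rat) (b m R : nat) :
  A \subset G -> N \subset A -> [~: A, A] \subset N -> S \subset G ->
  (#|S| <= b)%N -> (0 <= eps)%R -> hver_ge G S eps -> (#|G : A| <= m)%N ->
  ((m * R.+1 ^ (m * b))%:R < (1 + eps) ^+ R)%R ->
  (#|G : N| <= 2 * (m * R.+1 ^ (m * b)))%N.
Proof.
move=> sAG sNA sA'N sSG leSb eps_ge0 expS leGAm ltR; set q := (m * _)%N in ltR *.
have sNG : N \subset G := subset_trans sNA sAG.
have ball_le r : (r <= R)%N -> (#|ball N S r| <= q * #|N|)%N.
  move=> le_rR; apply: leq_trans (card_ball_le r sAG sNA sA'N sSG) _.
  rewrite mulnAC leq_mul2r [q]mulnC leq_mul ?orbT //.
  by rewrite (leq_trans (leq_pexp2l _ (leq_mul leGAm leSb))) ?leq_expn2r.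
have [r lt_rR half] : exists2 r, (r < R)%N & (#|G| < 2 * #|ball N S r|)%N.
  apply: (ball_exceeds_half sNG sSG eps_ge0 expS).
  apply: (@le_lt_trans _ _ (q * #|N|)%:R%R); first by rewrite ler_nat ball_le.
  by rewrite natrM ltr_pM2r ?ltr0n ?cardG_gt0.
rewrite -(leq_pmul2l (cardG_gt0 N)) (Lagrange sNG) mulnC -mulnA.
by apply/ltnW/(leq_trans half); rewrite leq_mul2l (ball_le r (ltnW lt_rR)) orbT.
Qed.

Definition bounded_abelianizations (gT : nat -> finGroupType)
    (G : forall n, {group gT n}) : Prop :=
  forall k, exists M, forall n (H : {group gT n}),
    H \subset G n -> (#|G n : H| <= k)%N -> (#|H : H^`(1)| <= M)%N.

Section BoundedAbelianizations.
Variables (gT : nat -> finGroupType) (G : forall n, {group gT n}).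

Lemma BAb_bounded_abelianizations : BAb G -> bounded_abelianizations G.
Proof.
move=> [f bound_f] k; exists (f k) => n H sHG le_k; apply: leq_trans (bound_f k n).
by apply: (@leq_bigmax_cond _ _ (fun K : {group gT n} => #|K : K^`(1)|) H); rewrite sHG.
Qed.

Lemma expanding_bounded_abelianizations :
  expanding_seq G -> bounded_abelianizations G.
Proof.
move=> [_ [b [eps [eps_gt0 expG]]]] k.
have [R ltR] := exp_gt_poly k (k * b) eps_gt0.
exists (2 * (k * R.+1 ^ (k * b)))%N => n H sHG le_k.
have [S [[sSG _ _] leSb expS]] := expG n.
have := index_le_of_expansion sHG (der_sub 1 H) (subxx _) sSG leSb (ltW eps_gt0)
  expS le_k ltR.
by apply: leq_trans; rewrite -(Lagrange_index sHG (der_sub 1 H)) leq_pmull.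
Qed.

Lemma bounded_derived_index : bounded_abelianizations G ->
  forall i, exists M, forall n, (#|G n : (G n)^`(i)| <= M)%N.
Proof.
move=> boundedG; elim=> [|i [M le_M]]; first by exists 1%N => n; rewrite derg0 indexgg.
have [M' le_M'] := boundedG M.
exists (M * M')%N => n; have sDG := der_sub i (G n).
rewrite -(Lagrange_index sDG (der_subS i (G n))) leq_mul //.
exact: le_M' sDG (le_M n).
Qed.

End BoundedAbelianizations.

Theorem mainTheorem5 (gT : nat -> finGroupType) (G : forall n, {group gT n})
  (Hsolv : forall n, solvable (G n))
  (Hdl : exists d : nat, forall n, (G n)^`(d) = 1)
  (Hinf : forall M : nat, exists N : nat, forall n, (N <= n)%N -> (M < #|G n|)%N) :
  ~ BAb G /\ ~ expanding_seq G.
Proof.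
have unbounded : ~ bounded_abelianizations G.
  move=> /bounded_derived_index boundedG; have [d trivial_d] := Hdl.
  have [M le_M] := boundedG d; have [n0 large] := Hinf M.
  by have := le_M n0; rewrite trivial_d indexg1 leqNgt large.
split; first by move/BAb_bounded_abelianizations.
by move/expanding_bounded_abelianizations.
Qed.
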